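(* Let $H$ be a complex Hilbert space with $\dim H=2$, let $u\in H$ be a unit vector and $P=|u\rangle\langle u|$ the corresponding rank-one orthogonal projection, and let $R\in B(H)_+$. Define $R_0:=R$ and $R_{n+1}:=R_n^{1/2}(I-P)R_n^{1/2}$ for $n\ge0$. Then $R_n$ converges in norm to $$R_\infty=\begin{cases}0, & \text{if } PR\neq RP,\\ R^{1/2}(I-P)R^{1/2}=(I-P)R(I-P), & \text{if } PR=RP.\end{cases}$$
   Context: For vectors $x,y$, $|x\rangle\langle y|$ denotes the operator $z\mapsto\langle y,z\rangle x$. $B(H)_+$ denotes the positive bounded operators on $H$, and $R^{1/2}$ is the positive square root. *)

From HB Require Import structures.
From mathcomp Require Import all_boot all_order all_algebra.
From mathcomp Require Import reals.
From mathcomp Require Import complex.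
From Stdlib Require Import ClassicalEpsilon.
Set Implicit Arguments. Unset Strict Implicit. Unset Printing Implicit Defensive.
Import Order.TTheory GRing.Theory Num.Theory.
Local Open Scope ring_scope.

Section Defs.
Variable R : realType.
Local Notation C := R[i].

Definition adjm (m n : nat) (A : 'M[C]_(m, n)) : 'M[C]_(n, m) :=
  (map_mx Num.conj A)^T.

(* inner product <y,z> = y^* z (antilinear in the first slot) *)
Definition inner (y z : 'cV[C]_2) : C := (adjm y *m z) 0 0.

Definition vnorm2 (x : 'cV[C]_2) : C := inner x x.

Definition psd (A : 'M[C]_2) : Prop := forall x : 'cV[C]_2, 0 <= inner x (A *m x).

Definition psqrt (A : 'M[C]_2) : 'M[C]_2 :=
  epsilon (inhabits 0) (fun S => psd S /\ S *m S = A).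

(* rank-one operator |x><y| : z |-> <y,z> x *)
Definition ketbra (x y : 'cV[C]_2) : 'M[C]_2 := x *m adjm y.

Definition Rseq (P A : 'M[C]_2) (n : nat) : 'M[C]_2 :=
  iter n (fun S => psqrt S *m (1 - P) *m psqrt S) A.

(* norm convergence: for every eps > 0, eventually ||A_n - L|| <= eps, where
   ||B|| <= eps  iff  ||B x|| <= eps ||x|| for all x (squared form) *)
Definition norm_cvg (A : nat -> 'M[C]_2) (L : 'M[C]_2) : Prop :=
  forall eps : C, 0 < eps -> exists N : nat, forall n : nat, (N <= n)%N ->
    forall x : 'cV[C]_2, vnorm2 ((A n - L) *m x) <= eps ^+ 2 * vnorm2 x.

End Defs.

From HB Require Import structures.
From mathcomp Require Import all_boot all_order all_algebra.
From mathcomp Require Import reals complex ring lra.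
From Stdlib Require Import ClassicalEpsilon.
Set Implicit Arguments. Unset Strict Implicit. Unset Printing Implicit Defensive.
Import Order.TTheory GRing.Theory Num.Theory.
Local Open Scope ring_scope.

(* Write 1 - P = |v><v| with v a unit vector orthogonal to u, and put
   x := R^{1/2} v, so that R_1 = |x><x| has rank one.  The positive square root
   of k|x><x| is (sqrt k / |x|) |x><x|, hence every further step multiplies the
   current iterate by c := |<x,v>|^2 / |x|^2 and R_{n+1} = c^n |x><x|.  By
   Cauchy-Schwarz 0 <= c <= 1, and c = 1 forces v to be an eigenvector of
   R^{1/2}, hence of R, i.e. PR = RP.  So without commutation R_n -> 0
   geometrically, while with commutation R_n = R_1 = (1 - P) R (1 - P) for all
   n >= 1. *)

Section GeometricDecay.
Variable R : archiRealFieldType.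

Lemma Bernoulli_ineq (h : R) m : 0 <= h -> 1 + m%:R * h <= (1 + h) ^+ m.
Proof.
move=> h_ge0; elim: m => [|m IHm]; first by rewrite mul0r addr0 expr0.
have mh_ge0 : 0 <= m%:R * h by rewrite mulr_ge0.
rewrite exprSr -natr1; apply: le_trans (ler_wpM2r _ IHm); last exact: addr_ge0.
nra.
Qed.

Lemma exprn_eventually_le (r d : R) : 0 <= r -> r < 1 -> 0 < d ->
  exists N, forall m, (N <= m)%N -> r ^+ m <= d.
Proof.
move=> r_ge0 r_lt1 d_gt0; have [->|r_neq0] := eqVneq r 0.
  by exists 1%N => m m_gt0; rewrite expr0n -(prednK m_gt0) ltW.
have r_gt0 : 0 < r by rewrite lt_def r_neq0.
pose h := r^-1 - 1.
have h_gt0 : 0 < h by rewrite subr_gt0 invf_gt1.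
have r1h : r * (1 + h) = 1 by rewrite addrC subrK mulfV.
exists (Num.bound (d * h)^-1) => m hm.
have mdh : 1 <= m%:R * (d * h).
  rewrite -ler_pdivrMr ?mulr_gt0 // div1r; apply/ltW/(lt_le_trans (archi_boundP _)).
    by rewrite invr_ge0 ltW ?mulr_gt0.
  by rewrite ler_nat.
have growth : 1 <= d * (1 + h) ^+ m.
  have := Bernoulli_ineq m (ltW h_gt0); have : 0 <= m%:R :> R by []; nra.
rewrite -[r ^+ m]mulr1; apply: le_trans (ler_wpM2l (exprn_ge0 m r_ge0) growth) _.
by rewrite mulrCA -exprMn r1h expr1n mulr1.
Qed.

End GeometricDecay.

Lemma exprn_eventually_leC (R : realType) (c d : R[i]) : 0 <= c -> c < 1 -> 0 < d ->
  exists N, forall m, (N <= m)%N -> c ^+ m <= d.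
Proof.
move=> c_ge0 c_lt1 d_gt0.
have ec : ((complex.Re c)%:C)%C = c := RRe_real (ger0_real c_ge0).
have ed : ((complex.Re d)%:C)%C = d := RRe_real (ger0_real (ltW d_gt0)).
have [|||N hN] := @exprn_eventually_le R (complex.Re c) (complex.Re d).
- by rewrite -lecR ec.
- by rewrite -ltcR ec.
- by rewrite -ltcR ed.
by exists N => m hm; rewrite -ec -ed -rmorphXn lecR hN.
Qed.

Section Matrix22.
Variable F : comNzRingType.
Implicit Type A : 'M[F]_2.

Lemma ord2P (i : 'I_2) : i = 0 \/ i = 1.
Proof. by case: i => [[|[|//]]] Hi; [left|right]; apply: val_inj. Qed.

Lemma sum_ord2 (V : nmodType) (G : 'I_2 -> V) : \sum_(i < 2) G i = G 0 + G 1.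
Proof. by rewrite big_ord_recl big_ord1; congr (_ + G _); apply: val_inj. Qed.

Lemma mxtrace22 A : \tr A = A 0 0 + A 1 1.
Proof. by rewrite /mxtrace sum_ord2. Qed.

Lemma det_mx22 A : \det A = A 0 0 * A 1 1 - A 0 1 * A 1 0.
Proof.
rewrite (expand_det_row A 0) sum_ord2 /cofactor !det_mx11 !mxE /=.
have -> : lift 0 ord0 = 1 :> 'I_2 by apply: val_inj.
have -> : lift 1 ord0 = 0 :> 'I_2 by apply: val_inj.
by rewrite expr0 /bump /=; ring.
Qed.

Lemma mx22_Cayley_Hamilton A : A *m A = \tr A *: A - (\det A)%:M.
Proof.
rewrite mxtrace22 det_mx22; apply/matrixP => i j; rewrite !mxE sum_ord2.
by case: (ord2P i) => ->; case: (ord2P j) => -> /=; ring.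
Qed.

Lemma mx22_sqr_add_scalar A s :
  s ^+ 2 = \det A -> (A + s%:M) *m (A + s%:M) = (\tr A + s *+ 2) *: A.
Proof.
move=> hs; rewrite mulmxDl !mulmxDr mx22_Cayley_Hamilton mul_mx_scalar mul_scalar_mx.
rewrite -scalar_mxM -expr2 hs scalerDl -scalerMnl mulr2n -!addrA; congr (_ + _).
by rewrite addrCA (addrC _ (\det A)%:M) addKr.
Qed.

End Matrix22.

Section Hilbert2.
Variable R : realType.
Local Notation C := R[i].
Implicit Types (k a : C) (u x y z v w : 'cV[C]_2) (A S M : 'M[C]_2).

Lemma adjmK m n (B : 'M[C]_(m, n)) : adjm (adjm B) = B.
Proof. by apply/matrixP => i j; rewrite !mxE conjCK. Qed.

Lemma adjmM m n p (B : 'M[C]_(m, n)) (D : 'M[C]_(n, p)) :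
  adjm (B *m D) = adjm D *m adjm B.
Proof. by rewrite /adjm map_mxM trmx_mul. Qed.

Lemma adjmD m n (B D : 'M[C]_(m, n)) : adjm (B + D) = adjm B + adjm D.
Proof. by apply/matrixP => i j; rewrite !mxE rmorphD. Qed.

Lemma adjmN m n (B : 'M[C]_(m, n)) : adjm (- B) = - adjm B.
Proof. by apply/matrixP => i j; rewrite !mxE rmorphN. Qed.

Lemma adjmZ m n k (B : 'M[C]_(m, n)) : adjm (k *: B) = k^* *: adjm B.
Proof. by apply/matrixP => i j; rewrite !mxE rmorphM. Qed.

Lemma adjm_delta m n (i : 'I_m) (j : 'I_n) :
  adjm (delta_mx i j : 'M[C]_(m, n)) = delta_mx j i.
Proof. by apply/matrixP => p q; rewrite !mxE rmorph_nat andbC. Qed.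

Lemma inner_sum y z : inner y z = \sum_(i < 2) (y i 0)^* * z i 0.
Proof. by rewrite /inner !mxE; apply: eq_bigr => i _; rewrite !mxE. Qed.

Lemma inner_delta i M j : inner (delta_mx i 0) (M *m delta_mx j 0) = M i j.
Proof. by rewrite /inner adjm_delta mulmxA -rowE -colE !mxE. Qed.

Lemma inner_adjm y M z : inner y (M *m z) = inner (adjm M *m y) z.
Proof. by rewrite /inner adjmM adjmK mulmxA. Qed.

Lemma innerDl y1 y2 z : inner (y1 + y2) z = inner y1 z + inner y2 z.
Proof. by rewrite /inner adjmD mulmxDl mxE. Qed.

Lemma innerDr y z1 z2 : inner y (z1 + z2) = inner y z1 + inner y z2.
Proof. by rewrite /inner mulmxDr mxE. Qed.

Lemma innerNl y z : inner (- y) z = - inner y z.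
Proof. by rewrite /inner adjmN mulNmx mxE. Qed.

Lemma innerNr y z : inner y (- z) = - inner y z.
Proof. by rewrite /inner mulmxN mxE. Qed.

Lemma innerBl y1 y2 z : inner (y1 - y2) z = inner y1 z - inner y2 z.
Proof. by rewrite innerDl innerNl. Qed.

Lemma innerBr y z1 z2 : inner y (z1 - z2) = inner y z1 - inner y z2.
Proof. by rewrite innerDr innerNr. Qed.

Lemma innerZl k y z : inner (k *: y) z = k^* * inner y z.
Proof. by rewrite /inner adjmZ -scalemxAl mxE. Qed.

Lemma innerZr k y z : inner y (k *: z) = k * inner y z.
Proof. by rewrite /inner -scalemxAr mxE. Qed.

Lemma inner0l z : inner 0 z = 0.
Proof. by rewrite -(scale0r 0) innerZl rmorph0 mul0r. Qed.

Lemma inner0r y : inner y 0 = 0.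
Proof. by rewrite -(scale0r 0) innerZr mul0r. Qed.

Lemma innerC y z : (inner y z)^* = inner z y.
Proof.
rewrite !inner_sum rmorph_sum; apply: eq_bigr => i _.
by rewrite rmorphM /= conjCK mulrC.
Qed.

Lemma inner_ge0 x : 0 <= inner x x.
Proof. by rewrite inner_sum sumr_ge0 // => i _; rewrite mulrC mul_conjC_ge0. Qed.

Lemma inner_eq0 x : (inner x x == 0) = (x == 0).
Proof.
apply/idP/eqP => [|->]; last by rewrite inner0l.
rewrite inner_sum => /eqP /psumr_eq0P x0; apply/matrixP => i j; rewrite (ord1 j) mxE.
apply/eqP; rewrite -mul_conjC_eq0 mulrC x0 // => k _.
by rewrite mulrC mul_conjC_ge0.
Qed.

Lemma inner_gt0 x : x != 0 -> 0 < inner x x.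
Proof. by rewrite lt_def inner_eq0 inner_ge0 andbT. Qed.

Lemma inner_mul_conj_ge0 x y : 0 <= inner x y * inner y x.
Proof. by rewrite -innerC mulrC mul_conjC_ge0. Qed.

Lemma ketbra_mulmx x y z : ketbra x y *m z = inner y z *: x.
Proof. by rewrite /ketbra -mulmxA [adjm y *m z]mx11_scalar mul_mx_scalar. Qed.

Lemma ketbra_mul x y z w : ketbra x y *m ketbra z w = inner y z *: ketbra x w.
Proof. by rewrite {1}/ketbra mulmxA ketbra_mulmx -scalemxAl. Qed.

Lemma mulmx_ketbra M x y : M *m ketbra x y = ketbra (M *m x) y.
Proof. by rewrite /ketbra mulmxA. Qed.

Lemma ketbra_mulmxr x y M : ketbra x y *m M = ketbra x (adjm M *m y).
Proof. by rewrite /ketbra adjmM adjmK mulmxA. Qed.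

Lemma ketbraZl k x y : ketbra (k *: x) y = k *: ketbra x y.
Proof. by rewrite /ketbra scalemxAl. Qed.

Lemma ketbraZr k x y : ketbra x (k *: y) = k^* *: ketbra x y.
Proof. by rewrite /ketbra adjmZ scalemxAr. Qed.

Lemma conjC_eq_of_polar (a b : C) :
  (a + b)^* = a + b -> ('i * (a - b))^* = 'i * (a - b) -> a = b^*.
Proof.
rewrite rmorphD rmorphM rmorphB /= conjCi => hsum hdiff.
have hdiff' : a^* - b^* = b - a.
  have := congr1 ( *%R 'i) hdiff; rewrite !mulrA mulrN -expr2 sqrCi.
  by rewrite opprK mul1r mulN1r opprB.
suff <- : a^* = b by rewrite conjCK.
have -> : a^* = ((a^* + b^*) + (a^* - b^*)) / 2%:R by field.
by rewrite hsum hdiff'; field.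
Qed.

Lemma psd_inner_conj S y z : psd S -> inner y (S *m z) = (inner z (S *m y))^*.
Proof.
move=> hS; pose q w := inner w (S *m w).
have q_real w : (q w)^* = q w by apply/geC0_conj/hS.
apply: conjC_eq_of_polar.
  have -> : inner y (S *m z) + inner z (S *m y) = q (y + z) - q y - q z.
    by rewrite /q mulmxDr !innerDl !innerDr; ring.
  by rewrite !rmorphB /= !q_real.
have -> : 'i * (inner y (S *m z) - inner z (S *m y)) = q (y + 'i *: z) - q y - q z.
  rewrite /q mulmxDr -scalemxAr !innerDl !innerDr !innerZl !innerZr conjCi.
  have ii : 'i * 'i = -1 :> C by rewrite -expr2 sqrCi.
  ring: ii.
by rewrite !rmorphB /= !q_real.
Qed.

Lemma psd_adjm S : psd S -> adjm S = S.
Proof.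
move=> hS; apply/matrixP => i j; rewrite !mxE.
by rewrite -!inner_delta (psd_inner_conj _ _ hS) conjCK.
Qed.

Lemma psd_diag_ge0 A i : psd A -> 0 <= A i i.
Proof. by move=> hA; rewrite -inner_delta. Qed.

Lemma psd_ketbra k x : 0 <= k -> psd (k *: ketbra x x).
Proof.
move=> k_ge0 z; rewrite -scalemxAl ketbra_mulmx !innerZr.
by rewrite mulr_ge0 // inner_mul_conj_ge0.
Qed.

Lemma herm_sqr_mulmx_eq0 m S (B : 'M[C]_(2, m)) :
  adjm S = S -> S *m (S *m B) = 0 -> S *m B = 0.
Proof.
move=> hS SSB; apply/matrixP => i j; pose y : 'cV[C]_2 := B *m delta_mx j 0.
have : S *m y == 0.
  by rewrite -inner_eq0 {1}inner_adjm hS /y !mulmxA -(mulmxA S S) SSB !mul0mx inner0l.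
by rewrite /y mulmxA -colE => /eqP/colP/(_ i); rewrite !mxE.
Qed.

Lemma psd_eigvec_sqrt S y a : psd S -> 0 <= a -> S *m (S *m y) = a *: y ->
  S *m y = sqrtC a *: y.
Proof.
move=> hS a_ge0 SSy; have [a0|a_neq0] := eqVneq a 0.
  rewrite a0 sqrtC0 scale0r; apply: herm_sqr_mulmx_eq0; first exact: psd_adjm.
  by rewrite SSy a0 scale0r.
set s := sqrtC a; have s_gt0 : 0 < s by rewrite sqrtC_gt0 lt_def a_neq0.
set w := S *m y - s *: y.
have Sw : S *m w = - s *: w.
  rewrite /w mulmxBr -scalemxAr SSy -[a]sqrtCK -/s expr2 -scalerA.
  by rewrite scaleNr scalerBr opprB.
have : inner w (S *m w) == 0.
  rewrite eq_le hS andbT Sw innerZr mulNr oppr_le0 mulr_ge0 ?inner_ge0 ?ltW //.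
rewrite Sw innerZr mulNr oppr_eq0 mulf_eq0.
by rewrite gt_eqF //= inner_eq0 subr_eq0 => /eqP.
Qed.

Definition cv2 (p q : C) : 'cV[C]_2 := \col_i (if i == 0 then p else q).

Lemma quad_cv2 A p q : inner (cv2 p q) (A *m cv2 p q) =
  p^* * (A 0 0 * p + A 0 1 * q) + q^* * (A 1 0 * p + A 1 1 * q).
Proof. by rewrite inner_sum sum_ord2 !mxE !sum_ord2 !mxE. Qed.

Lemma psd_trace_ge0 A : psd A -> 0 <= \tr A.
Proof. by move=> hA; rewrite mxtrace22 addr_ge0 ?psd_diag_ge0. Qed.

(* The form takes the values a det A and d det A at (-b, a) and (d, -conj b). *)
Lemma psd_det_ge0 A : psd A -> 0 <= \det A.
Proof.
move=> hA; have c_conj : A 1 0 = (A 0 1)^* by rewrite -{1}(psd_adjm hA) !mxE.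
have a_ge0 := psd_diag_ge0 0 hA; have d_ge0 := psd_diag_ge0 1 hA.
have quad p q : 0 <= p^* * (A 0 0 * p + A 0 1 * q) + q^* * ((A 0 1)^* * p + A 1 1 * q).
  by rewrite -c_conj -quad_cv2.
rewrite det_mx22 c_conj.
move: (A 0 0) (A 0 1) (A 1 1) a_ge0 d_ge0 quad => a b d a_ge0 d_ge0 quad.
have [ad0|ad_neq0] := eqVneq (a + d) 0.
  move/eqP: ad0; rewrite paddr_eq0 // => /andP[/eqP a0 /eqP d0].
  have := quad 1 (- b^*); rewrite a0 d0 rmorph1 rmorphN /= conjCK.
  have -> : 1 * (0 * 1 + b * - b^*) + - b * (b^* * 1 + 0 * - b^*) = (0 * 0 - b * b^*) *+ 2.
    by ring.
  by rewrite pmulrn_lge0.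
have ad_gt0 : 0 < a + d by rewrite lt_def ad_neq0 addr_ge0.
rewrite -(pmulr_rge0 _ ad_gt0) mulrDl addr_ge0 //.
  have := quad (- b) a; rewrite rmorphN /= (geC0_conj a_ge0).
  by congr (0 <= _); ring.
have := quad d (- b^*); rewrite rmorphN /= conjCK (geC0_conj d_ge0).
by congr (0 <= _); ring.
Qed.

Lemma psqrt_exists A : psd A -> exists S, psd S /\ S *m S = A.
Proof.
move=> hA; set s := sqrtC (\det A); set tau := \tr A + s *+ 2.
have s_ge0 : 0 <= s by rewrite sqrtC_ge0 psd_det_ge0.
have tr_ge0 := psd_trace_ge0 hA.
have sqr : (A + s%:M) *m (A + s%:M) = tau *: A.
  by apply: mx22_sqr_add_scalar; rewrite sqrtCK.
have [tau0|tau_neq0] := eqVneq tau 0.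
  exists 0; split; first by move=> x; rewrite mul0mx inner0r.
  have s0 : s = 0.
    by move/eqP: tau0; rewrite paddr_eq0 ?mulrn_wge0 // mulrn_eq0 => /andP[_ /eqP].
  rewrite s0 raddf0 addr0 tau0 scale0r in sqr.
  rewrite mul0mx -[A]mulmx1; symmetry; apply: herm_sqr_mulmx_eq0 (psd_adjm hA) _.
  by rewrite mulmx1.
set r := sqrtC tau.
have r_gt0 : 0 < r by rewrite sqrtC_gt0 lt_def tau_neq0 addr_ge0 ?mulrn_wge0.
exists (r^-1 *: (A + s%:M)); split.
  move=> x; rewrite -scalemxAl mulmxDl mul_scalar_mx innerZr innerDr innerZr.
  apply: mulr_ge0; first by rewrite invr_ge0 ltW.
  by rewrite addr_ge0 ?mulr_ge0 ?inner_ge0 //; apply: hA.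
rewrite -scalemxAl -scalemxAr sqr !scalerA -[tau]sqrtCK -/r expr2.
by rewrite -invfM mulVf ?scale1r // mulf_neq0 // gt_eqF.
Qed.

Lemma psqrt_spec A : psd A -> psd (psqrt A) /\ psqrt A *m psqrt A = A.
Proof. by move=> /psqrt_exists; apply: epsilon_spec. Qed.

Definition proj x y := (inner x y / inner x x) *: x.

Definition proj_norm2 x y := inner x y * inner y x / inner x x.

Lemma proj_norm2_ge0 x y : 0 <= proj_norm2 x y.
Proof. by rewrite divr_ge0 ?inner_mul_conj_ge0 ?inner_ge0. Qed.

Lemma inner_proj_compl x y :
  inner (y - proj x y) (y - proj x y) = inner y y - proj_norm2 x y.
Proof.
have [->|x_neq0] := eqVneq x 0.
  by rewrite /proj /proj_norm2 scaler0 subr0 inner0l !mul0r subr0.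
rewrite /proj /proj_norm2 innerBl !innerBr !innerZl !innerZr rmorphM fmorphV /=.
rewrite (geC0_conj (inner_ge0 x)) innerC.
by field; rewrite inner_eq0.
Qed.

Lemma proj_norm2_le x y : proj_norm2 x y <= inner y y.
Proof. by rewrite -subr_ge0 -inner_proj_compl inner_ge0. Qed.

Lemma proj_norm2_eq x y : proj_norm2 x y = inner y y -> y = proj x y.
Proof.
move=> h; apply/eqP; rewrite -subr_eq0 -inner_eq0.
by rewrite inner_proj_compl h subrr.
Qed.

Lemma Cauchy_Schwarz x y : inner x y * inner y x <= inner x x * inner y y.
Proof.
have [->|x_neq0] := eqVneq x 0; first by rewrite !inner0l !mul0r.
by rewrite [X in _ <= X]mulrC -ler_pdivrMr ?inner_gt0 // proj_norm2_le.
Qed.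

Lemma psd_sqrt_ketbra S k x : psd S -> 0 <= k -> S *m S = k *: ketbra x x ->
  S = (sqrtC k / sqrtC (inner x x)) *: ketbra x x.
Proof.
move=> hS k_ge0 SS; have S_adj := psd_adjm hS.
have S_eq0 : S *m S = 0 -> S = 0.
  by move=> SS0; rewrite -[S]mulmx1; apply: herm_sqr_mulmx_eq0; rewrite // mulmx1.
have [k0|k_neq0] := eqVneq k 0.
  by rewrite k0 sqrtC0 mul0r scale0r; apply: S_eq0; rewrite SS k0 scale0r.
have [x0|x_neq0] := eqVneq x 0.
  by rewrite x0 /ketbra mul0mx scaler0; apply: S_eq0; rewrite SS x0 /ketbra mul0mx scaler0.
set n := inner x x; have n_gt0 : 0 < n := inner_gt0 x_neq0.
have Sx : S *m x = sqrtC (k * n) *: x.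
  apply: psd_eigvec_sqrt; rewrite ?mulr_ge0 ?inner_ge0 //.
  by rewrite mulmxA SS -scalemxAl ketbra_mulmx scalerA.
have : S *m (1%:M - n^-1 *: ketbra x x) = 0.
  apply: herm_sqr_mulmx_eq0; rewrite // mulmxA SS mulmxBr mulmx1.
  rewrite -scalemxAr -scalemxAl ketbra_mul !scalerA -/n mulrAC.
  by rewrite mulVf ?gt_eqF // mul1r subrr.
move/eqP; rewrite mulmxBr mulmx1 subr_eq0 => /eqP ->.
rewrite -scalemxAr mulmx_ketbra Sx ketbraZl scalerA; congr (_ *: _).
have sqrt_n_neq0 : sqrtC n != 0 by rewrite sqrtC_eq0 gt_eqF.
have nE : n = sqrtC n * sqrtC n by rewrite -expr2 sqrtCK.
rewrite sqrtCM ?nnegrE ?(ltW n_gt0) // {1}nE.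
by field.
Qed.

Lemma ketbra_sandwich x v :
  ketbra x x *m ketbra v v *m ketbra x x = (inner x v * inner v x) *: ketbra x x.
Proof. by rewrite !ketbra_mul -scalemxAl ketbra_mul scalerA. Qed.

Lemma psqrt_ketbra_compress k x v : 0 <= k ->
  psqrt (k *: ketbra x x) *m ketbra v v *m psqrt (k *: ketbra x x)
  = (k * proj_norm2 x v) *: ketbra x x.
Proof.
move=> k_ge0; have [hS SS] := psqrt_spec (psd_ketbra x k_ge0).
rewrite (psd_sqrt_ketbra hS k_ge0 SS) -scalemxAl -scalemxAr -scalemxAl.
rewrite ketbra_sandwich !scalerA; congr (_ *: _).
have -> : sqrtC k / sqrtC (inner x x) * (sqrtC k / sqrtC (inner x x)) = k / inner x x.
  by rewrite -expr2 expr_div_n !sqrtCK.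
by rewrite /proj_norm2; ring.
Qed.

Definition vperp (u : 'cV[C]_2) : 'cV[C]_2 := cv2 (- (u 1 0)^*) ((u 0 0)^*).

Lemma vnorm2_vperp u : vnorm2 (vperp u) = vnorm2 u.
Proof. by rewrite /vnorm2 !inner_sum !sum_ord2 !mxE /= rmorphN /= !conjCK; ring. Qed.

Lemma ketbra_vperp u : vnorm2 u = 1 -> 1 - ketbra u u = ketbra (vperp u) (vperp u).
Proof.
rewrite /vnorm2 inner_sum sum_ord2 => hu.
apply/matrixP => i j; rewrite /ketbra !mxE !big_ord1 !mxE.
rewrite -[ord0]/(0 : 'I_1).
by case: (ord2P i) => ->; case: (ord2P j) => -> /=; rewrite ?rmorphN /= ?conjCK -?hu; ring.
Qed.

Lemma vnorm2_ketbra_mulmx k x z : 0 <= k ->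
  vnorm2 ((k *: ketbra x x) *m z) <= (k * vnorm2 x) ^+ 2 * vnorm2 z.
Proof.
move=> k_ge0; rewrite -scalemxAl ketbra_mulmx scalerA /vnorm2 innerZl innerZr.
rewrite rmorphM /= (geC0_conj k_ge0) innerC.
have -> : k * inner z x * (k * inner x z * inner x x)
  = k ^+ 2 * inner x x * (inner x z * inner z x) by ring.
have -> : (k * inner x x) ^+ 2 * inner z z
  = k ^+ 2 * inner x x * (inner x x * inner z z) by ring.
by rewrite ler_wpM2l ?mulr_ge0 ?exprn_ge0 ?inner_ge0 ?Cauchy_Schwarz.
Qed.

Lemma norm_cvg_geometric (f : nat -> 'M[C]_2) c x : 0 <= c -> c < 1 ->
  (forall n, f n.+1 = c ^+ n *: ketbra x x) -> norm_cvg f 0.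
Proof.
move=> c_ge0 c_lt1 f_geom eps eps_gt0.
have [N hN] : exists N, forall m, (N <= m)%N -> c ^+ m * vnorm2 x <= eps.
  have [x0|x_neq0] := eqVneq x 0.
    by exists 0%N => m _; rewrite x0 /vnorm2 inner0l mulr0 ltW.
  have [N hN] := exprn_eventually_leC c_ge0 c_lt1 (divr_gt0 eps_gt0 (inner_gt0 x_neq0)).
  by exists N => m /hN; rewrite ler_pdivlMr ?inner_gt0.
exists N.+1 => -[//|m] hm z; rewrite f_geom subr0.
apply: le_trans (vnorm2_ketbra_mulmx _ _ (exprn_ge0 m c_ge0)) _.
rewrite ler_wpM2r ?inner_ge0 // !expr2.
by rewrite ler_pM ?mulr_ge0 ?exprn_ge0 ?inner_ge0 ?hN.
Qed.

Lemma norm_cvg_eventually_const (f : nat -> 'M[C]_2) L :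
  (forall n, f n.+1 = L) -> norm_cvg f L.
Proof.
move=> fL eps eps_gt0; exists 1%N => -[//|n] _ z.
by rewrite fL subrr mul0mx /vnorm2 inner0l mulr_ge0 ?inner_ge0 ?exprn_ge0 // ltW.
Qed.

Lemma ketbra_comm_eigvec A v : inner v v = 1 -> adjm A = A ->
  comm_mx (ketbra v v) A <-> A *m v = inner v (A *m v) *: v.
Proof.
move=> v_unit A_adj; have a_real : (inner v (A *m v))^* = inner v (A *m v).
  by rewrite innerC inner_adjm A_adj.
split => [comm | Av].
  by rewrite -{1}(scale1r v) -v_unit -ketbra_mulmx mulmxA -comm -mulmxA ketbra_mulmx.
rewrite /comm_mx ketbra_mulmxr A_adj mulmx_ketbra Av.
by rewrite ketbraZl ketbraZr a_real.
Qed.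

End Hilbert2.

Lemma comm_mx_1Bl (R : pzRingType) n (P A : 'M[R]_n) :
  comm_mx P A -> comm_mx (1%:M - P) A.
Proof. by move=> /comm_mx_sym comm; apply/comm_mx_sym/comm_mxB/comm/comm_mx1. Qed.

Section Iteration.
Variable R : realType.
Variables (u : 'cV[R[i]]_2) (A : 'M[R[i]]_2).
Hypotheses (u_unit : vnorm2 u = 1) (A_psd : psd A).
Local Notation P := (ketbra u u).
Local Notation v := (vperp u).
Local Notation S := (psqrt A).
Local Notation x := (psqrt A *m vperp u).

Let v_unit : inner v v = 1. Proof. exact: etrans (vnorm2_vperp u) u_unit. Qed.
Let S_psd : psd S. Proof. by case: (psqrt_spec A_psd). Qed.
Let S_sqr : S *m S = A. Proof. by case: (psqrt_spec A_psd). Qed.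
Let compl_P : 1 - P = ketbra v v. Proof. exact: ketbra_vperp. Qed.

Lemma psqrt_compress : S *m (1 - P) *m S = ketbra x x.
Proof. by rewrite compl_P mulmx_ketbra ketbra_mulmxr psd_adjm. Qed.

Lemma Rseq_succ n : Rseq P A n.+1 = proj_norm2 x v ^+ n *: ketbra x x.
Proof.
elim: n => [|n IHn]; first by rewrite expr0 scale1r -psqrt_compress.
have -> : Rseq P A n.+2 = psqrt (Rseq P A n.+1) *m (1 - P) *m psqrt (Rseq P A n.+1) by [].
by rewrite IHn compl_P psqrt_ketbra_compress ?exprn_ge0 ?proj_norm2_ge0 // exprSr.
Qed.

Lemma comm_P_eigvec : comm_mx P A <-> A *m v = inner v (A *m v) *: v.
Proof.
rewrite -ketbra_comm_eigvec ?psd_adjm // -compl_P.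
split; first exact: comm_mx_1Bl.
by move=> /comm_mx_1Bl; rewrite opprB addrC subrK.
Qed.

Lemma comm_psqrt_eigvec : comm_mx P A -> S *m v = sqrtC (inner v (A *m v)) *: v.
Proof.
by move=> /comm_P_eigvec Av; apply: psd_eigvec_sqrt S_psd _ _; rewrite // mulmxA S_sqr.
Qed.

Lemma comm_compress : comm_mx P A -> S *m (1 - P) *m S = (1 - P) *m A *m (1 - P).
Proof.
move=> comm; rewrite psqrt_compress comm_psqrt_eigvec // ketbraZl ketbraZr scalerA.
rewrite geC0_conj ?sqrtC_ge0 // -expr2 sqrtCK compl_P.
by rewrite -mulmxA mulmx_ketbra ketbra_mul.
Qed.

Lemma Rseq_comm n : comm_mx P A -> Rseq P A n.+1 = ketbra x x.
Proof.
move=> comm; rewrite Rseq_succ.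
have [x0|x_neq0] := eqVneq x 0; first by rewrite x0 /ketbra mul0mx scaler0.
suff -> : proj_norm2 x v = 1 by rewrite expr1n scale1r.
move: x_neq0; rewrite comm_psqrt_eigvec //; set s := sqrtC _ => sv_neq0.
have s_neq0 : s != 0 by apply: contraNneq sv_neq0 => ->; rewrite scale0r.
rewrite /proj_norm2 !innerZl !innerZr v_unit !mulr1 divff //.
by rewrite mulf_neq0 ?conjC_eq0.
Qed.

Lemma proj_norm2_lt1 : ~ comm_mx P A -> proj_norm2 x v < 1.
Proof.
move=> not_comm; rewrite lt_neqAle -[X in _ <= X]v_unit proj_norm2_le andbT.
apply/eqP => c1; apply/not_comm/comm_P_eigvec.
have := proj_norm2_eq (etrans c1 (esym v_unit)); rewrite /proj.
set t := _ / _ => v_tx.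
have t_neq0 : t != 0.
  by apply: contra_eq_neq v_unit => t0; rewrite v_tx t0 scale0r inner0l eq_sym oner_neq0.
have Sv : S *m v = t^-1 *: v by rewrite [in RHS]v_tx scalerA mulVf ?scale1r.
have Av : A *m v = (t^-1 * t^-1) *: v.
  by rewrite -S_sqr -mulmxA Sv -scalemxAr Sv scalerA.
by rewrite Av innerZr v_unit mulr1.
Qed.

End Iteration.

Theorem lemma2p1 (R : realType) (u : 'cV[R[i]]_2) (A : 'M[R[i]]_2) :
  vnorm2 u = 1 -> psd A ->
  let P := ketbra u u in
  (P *m A = A *m P ->
     psqrt A *m (1 - P) *m psqrt A = (1 - P) *m A *m (1 - P)) /\
  norm_cvg (Rseq P A)
    (if P *m A == A *m P then psqrt A *m (1 - P) *m psqrt A else 0).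
Proof.
move=> u_unit A_psd P; split; first exact: comm_compress.
case: eqP => [comm | not_comm].
  rewrite psqrt_compress //; apply: norm_cvg_eventually_const => n.
  exact: Rseq_comm.
apply: (norm_cvg_geometric (proj_norm2_ge0 _ _) (proj_norm2_lt1 _ _ not_comm)) => //.
exact: Rseq_succ.
Qed.
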